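(* Let $f\in\mathcal{F}$, let $A$ be a finite subset of $f^{-1}(E)$ and let $b\in\mathbb{C}$. Then for every $\varepsilon>0$ there exists $g\in\mathcal{F}(f,A)$ such that $d_{\mathcal{F}}(f,g)<\varepsilon$ and $g(b)\in E$.
   Context: $\mathcal{F}$ is a Fréchet space of entire maps containing all complex polynomial maps, whose topology is finer than the topology of local uniform convergence on $\mathbb{C}$; $(\|\cdot\|_j)_{j\ge0}$ is a sequence of seminorms defining its topology and $d_{\mathcal{F}}(f,g)=\sum_{j\ge0}2^{-j}\min\{1,\|f-g\|_j\}$. $E$ is a countable dense subset of $\mathbb{C}$. For $f\in\mathcal{F}$ and $A\subseteq\mathbb{C}$, $\mathcal{F}(f,A)=\{g\in\mathcal{F}: g|_A=f|_A \text{ and } g'|_A=f'|_A\}$. *)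

From Stdlib Require Import Reals List.
From Coquelicot Require Import Coquelicot.
Open Scope R_scope.

(* Complex polynomial map with coefficient list [a0; a1; ...] (Horner evaluation). *)
Definition peval (l : list C) (z : C) : C :=
  fold_right (fun a acc => Cplus a (Cmult z acc)) (RtoC 0) l.

Definition fsub (f g : C -> C) : C -> C := fun z => Cminus (f z) (g z).
Definition fadd (f g : C -> C) : C -> C := fun z => Cplus (f z) (g z).
Definition fscal (c : C) (f : C -> C) : C -> C := fun z => Cmult c (f z).

Definition entire (f : C -> C) : Prop := forall z : C, ex_derive (K := C_AbsRing) f z.

Definition dF (sn : nat -> (C -> C) -> R) (f g : C -> C) : R :=
  Series (fun j => / 2 ^ j * Rmin 1 (sn j (fsub f g))).

(* A Fréchet space of entire maps containing all polynomial maps, whose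
   topology (given by the sequence of seminorms sn) is finer than the topology
   of local uniform convergence on C. *)
Record FrechetEntire := {
  Fset : (C -> C) -> Prop;
  sn : nat -> (C -> C) -> R;
  Fset_entire : forall f, Fset f -> entire f;
  Fset_add : forall f g, Fset f -> Fset g -> Fset (fadd f g);
  Fset_scal : forall c f, Fset f -> Fset (fscal c f);
  Fset_poly : forall l, Fset (peval l);
  sn_nonneg : forall j f, Fset f -> 0 <= sn j f;
  sn_triangle : forall j f g, Fset f -> Fset g -> sn j (fadd f g) <= sn j f + sn j g;
  sn_homog : forall j c f, Fset f -> sn j (fscal c f) = Cmod c * sn j f;
  sn_separating : forall f, Fset f -> (forall j, sn j f = 0) -> forall z, f z = RtoC 0;
  Fset_complete : forall u : nat -> (C -> C), (forall n, Fset (u n)) ->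
     (forall eps, 0 < eps -> exists N, forall m n, (N <= m)%nat -> (N <= n)%nat ->
         dF sn (u m) (u n) < eps) ->
     exists f, Fset f /\ is_lim_seq (fun n => dF sn (u n) f) 0;
  Fset_finer : forall f, Fset f -> forall r eps, 0 < r -> 0 < eps ->
     exists delta, 0 < delta /\ forall g, Fset g -> dF sn f g < delta ->
        forall z, Cmod z <= r -> Cmod (Cminus (g z) (f z)) < eps
}.

Definition countable_set (E : C -> Prop) : Prop :=
  exists e : nat -> C, forall z, E z <-> exists n, e n = z.
Definition dense_set (E : C -> Prop) : Prop :=
  forall z eps, 0 < eps -> exists w, E w /\ Cmod (Cminus w z) < eps.

Definition finite_set (A : C -> Prop) : Prop :=
  exists l : list C, forall z, A z <-> In z l.

Definition FfA (F : FrechetEntire) (f : C -> C) (A : C -> Prop) (g : C -> C) : Prop :=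
  Fset F g /\
  (forall a, A a -> g a = f a) /\
  (forall a, A a -> exists l : C,
       is_derive (K := C_AbsRing) g a l /\ is_derive (K := C_AbsRing) f a l).

From Stdlib Require Import Reals List Lra Classical FunctionalExtensionality.
From Coquelicot Require Import Coquelicot.
Open Scope R_scope.

(* Let P be a polynomial with a double zero at every point of A, and with
   P(b) <> 0 unless b is in A.  Then every g = f + cP agrees with f to first
   order on A, and since the seminorms are homogeneous, d_F(f, f + cP) -> 0
   as c -> 0.  By density of E one can pick c arbitrarily small with
   f(b) + c P(b) in E (c = 0 if b is in A, where f(b) is already in E). *)

(* The complex derivative as it appears in [entire] and [FfA], where the
   codomain is the canonical [C_NormedModule].  Coquelicot's product rule is
   stated for [AbsRing_NormedModule C_AbsRing] instead, whose ball is not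
   convertible to that of [C_NormedModule]. *)
Notation is_C_derive f x l := (@is_derive C_AbsRing C_NormedModule f x l).
Notation ex_C_derive f x := (@ex_derive C_AbsRing C_NormedModule f x).

Lemma is_derive_C_NormedModule (f : C -> C) (x l : C) :
  @is_derive C_AbsRing (AbsRing_NormedModule C_AbsRing) f x l ->
  is_C_derive f x l.
Proof. intros [[Hplus Hscal Hnorm] Hdom]; split; [split|]; assumption. Qed.

Lemma is_derive_AbsRing_NormedModule (f : C -> C) (x l : C) :
  is_C_derive f x l ->
  @is_derive C_AbsRing (AbsRing_NormedModule C_AbsRing) f x l.
Proof. intros [[Hplus Hscal Hnorm] Hdom]; split; [split|]; assumption. Qed.

Lemma is_derive_C_const (c x : C) : is_C_derive (fun _ => c) x (RtoC 0).
Proof. exact (is_derive_const (K := C_AbsRing) c x). Qed.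

Lemma is_derive_C_id (x : C) : is_C_derive (fun z => z) x (RtoC 1).
Proof. apply is_derive_C_NormedModule; exact (is_derive_id (K := C_AbsRing) x). Qed.

Lemma is_derive_C_plus (f g : C -> C) (x df dg : C) :
  is_C_derive f x df -> is_C_derive g x dg ->
  is_C_derive (fun z => f z + g z)%C x (df + dg)%C.
Proof. exact (is_derive_plus (K := C_AbsRing) f g x df dg). Qed.

Lemma is_derive_C_mult (f g : C -> C) (x df dg : C) :
  is_C_derive f x df -> is_C_derive g x dg ->
  is_C_derive (fun z => f z * g z)%C x (df * g x + f x * dg)%C.
Proof.
  intros Hf Hg; apply is_derive_C_NormedModule.
  apply (is_derive_mult (K := C_AbsRing) f g x df dg);
    [apply is_derive_AbsRing_NormedModule.. | exact Cmult_comm]; assumption.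
Qed.

Lemma is_derive_C_eq (f : C -> C) (x l l' : C) :
  is_C_derive f x l -> l = l' -> is_C_derive f x l'.
Proof. now intros Hf <-. Qed.

Definition double_zero (h : C -> C) (x : C) : Prop :=
  h x = RtoC 0 /\ is_C_derive h x (RtoC 0).

Lemma is_derive_sqr_factor (Q : C -> C) (a x q : C) :
  is_C_derive Q x q ->
  is_C_derive (fun z => (z - a) * ((z - a) * Q z))%C x
    ((x - a) * (2 * Q x + (x - a) * q))%C.
Proof.
  intros HQ.
  assert (Hlin : is_C_derive (fun z => z - a)%C x (RtoC 1)).
  { eapply is_derive_C_eq.
    - apply is_derive_C_plus; [apply is_derive_C_id | apply (is_derive_C_const (- a)%C)].
    - ring. }
  eapply is_derive_C_eq.
  - apply is_derive_C_mult; [exact Hlin|].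
    apply is_derive_C_mult; [exact Hlin | exact HQ].
  - cbv beta; ring.
Qed.

Lemma double_zero_sqr_factor_root (Q : C -> C) (a : C) :
  ex_C_derive Q a ->
  double_zero (fun z => (z - a) * ((z - a) * Q z))%C a.
Proof.
  intros [q Hq]; split.
  - ring.
  - eapply is_derive_C_eq; [exact (is_derive_sqr_factor Q a a q Hq) | ring].
Qed.

Lemma double_zero_sqr_factor (Q : C -> C) (a x : C) :
  double_zero Q x -> double_zero (fun z => (z - a) * ((z - a) * Q z))%C x.
Proof.
  intros [HQx HQ']; split.
  - rewrite HQx; ring.
  - eapply is_derive_C_eq; [exact (is_derive_sqr_factor Q a x _ HQ')|].
    rewrite HQx; ring.
Qed.

Lemma ex_derive_peval (l : list C) (x : C) : ex_C_derive (peval l) x.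
Proof.
  induction l as [|c l [dl Hl]]; simpl.
  - exists (RtoC 0); apply is_derive_C_const.
  - eexists; apply is_derive_C_plus; [apply is_derive_C_const|].
    apply is_derive_C_mult; [apply is_derive_C_id | exact Hl].
Qed.

Definition poly_add_const (c : C) (l : list C) : list C :=
  match l with nil => c :: nil | x :: r => (c + x)%C :: r end.

Fixpoint poly_mul_linear (a : C) (l : list C) : list C :=
  match l with
  | nil => nil
  | c :: l' => (- a * c)%C :: poly_add_const c (poly_mul_linear a l')
  end.

Definition poly_double_roots (L : list C) : list C :=
  fold_right (fun a l => poly_mul_linear a (poly_mul_linear a l)) (RtoC 1 :: nil) L.

Lemma peval_poly_add_const (c : C) (l : list C) (z : C) :
  peval (poly_add_const c l) z = (c + peval l z)%C.
Proof. destruct l; simpl; ring. Qed.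

Lemma peval_poly_mul_linear (a : C) (l : list C) (z : C) :
  peval (poly_mul_linear a l) z = ((z - a) * peval l z)%C.
Proof.
  induction l as [|c l IH]; simpl.
  - ring.
  - rewrite peval_poly_add_const, IH; ring.
Qed.

Lemma peval_poly_double_roots_cons (a : C) (L : list C) :
  peval (poly_double_roots (a :: L)) =
  (fun z => (z - a) * ((z - a) * peval (poly_double_roots L) z))%C.
Proof.
  apply functional_extensionality; intro z; simpl.
  now rewrite !peval_poly_mul_linear.
Qed.

Lemma poly_double_roots_double_zero (L : list C) (a : C) :
  In a L -> double_zero (peval (poly_double_roots L)) a.
Proof.
  induction L as [|a' L IH]; [intros []|].
  rewrite peval_poly_double_roots_cons; intros [<- | HaL].
  - apply double_zero_sqr_factor_root, ex_derive_peval.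
  - apply double_zero_sqr_factor, IH, HaL.
Qed.

Lemma poly_double_roots_neq_0 (L : list C) (b : C) :
  ~ In b L -> peval (poly_double_roots L) b <> RtoC 0.
Proof.
  induction L as [|a L IH]; intros Hb.
  - simpl. replace (1 + b * 0)%C with (RtoC 1) by ring. apply C1_nz.
  - rewrite peval_poly_double_roots_cons.
    assert (Hba : (b - a)%C <> RtoC 0).
    { apply Cminus_eq_contra; intros ->; apply Hb; left; reflexivity. }
    apply Cmult_neq_0; [exact Hba|].
    apply Cmult_neq_0; [exact Hba|].
    apply IH; intros H; apply Hb; right; exact H.
Qed.

Lemma is_series_geom_half : is_series (fun n => (/ 2) ^ n) 2.
Proof.
  assert (H : is_series (fun n => (/ 2) ^ n) (/ (1 - / 2)))
    by (apply is_series_geom; rewrite Rabs_pos_eq; lra).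
  now replace (/ (1 - / 2)) with 2 in H by field.
Qed.

Lemma weighted_min_bounds (t s : R) (j : nat) : 0 <= t -> 0 <= s ->
  0 <= / 2 ^ j * Rmin 1 (t * s) /\
  / 2 ^ j * Rmin 1 (t * s) <= (/ 2) ^ j /\
  / 2 ^ j * Rmin 1 (t * s) <= t * s.
Proof.
  intros Ht Hs; rewrite <- pow_inv.
  assert (Hw : 0 < (/ 2) ^ j) by (apply pow_lt; lra).
  assert (Hw1 : (/ 2) ^ j <= 1) by (rewrite <- (pow1 j); apply pow_incr; lra).
  assert (Hts : 0 <= t * s) by (apply Rmult_le_pos; assumption).
  assert (Hmin : 0 <= Rmin 1 (t * s)) by (apply Rmin_glb; lra).
  pose proof (Rmin_l 1 (t * s)); pose proof (Rmin_r 1 (t * s)).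
  repeat split; nra.
Qed.

(* Split the series after N terms: the head is O(t), the tail is at most 2^-N. *)
Lemma series_weighted_min_small (s : nat -> R) :
  (forall j, 0 <= s j) -> forall eps, 0 < eps ->
  exists eta, 0 < eta /\ forall t, 0 <= t < eta ->
    Series (fun j => / 2 ^ j * Rmin 1 (t * s j)) < eps.
Proof.
  intros Hs eps Heps.
  destruct (pow_lt_1_zero (/ 2) ltac:(rewrite Rabs_pos_eq; lra) (eps / 2) ltac:(lra))
    as [N HN].
  specialize (HN N (le_n N)); rewrite Rabs_pos_eq in HN by (apply pow_le; lra).
  set (sum_s := sum_f_R0 s N).
  assert (Hsum_s : 0 <= sum_s) by (apply cond_pos_sum; exact Hs).
  exists (eps / (2 * (sum_s + 1))); split; [apply Rdiv_lt_0_compat; lra|].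
  intros t [Ht Hteta].
  set (a := fun j => / 2 ^ j * Rmin 1 (t * s j)).
  assert (Ha : forall j, 0 <= a j /\ a j <= (/ 2) ^ j /\ a j <= t * s j)
    by (intro j; apply weighted_min_bounds; auto).
  assert (Hgeom : ex_series (fun j => (/ 2) ^ j)) by (eexists; apply is_series_geom_half).
  assert (Hex : ex_series a).
  { apply (ex_series_le a (fun j => (/ 2) ^ j)); [|exact Hgeom].
    intro j; change norm with Rabs; rewrite Rabs_pos_eq; apply Ha. }
  rewrite (Series_incr_n a (S N) (Nat.lt_0_succ N) Hex); simpl pred.
  assert (Hhead : sum_f_R0 a N <= t * sum_s).
  { unfold sum_s; rewrite scal_sum; apply sum_Rle; intros j _.
    rewrite Rmult_comm; apply Ha. }
  assert (Htail : Series (fun k => a (S N + k)%nat) <= (/ 2) ^ N).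
  { apply Rle_trans with (Series (fun k => (/ 2) ^ S N * (/ 2) ^ k)).
    - apply Series_le; [|exact (ex_series_scal_l ((/ 2) ^ S N) _ Hgeom)].
      intro k; rewrite <- pow_add; split; apply Ha.
    - rewrite (Series_scal_l ((/ 2) ^ S N) (fun k => (/ 2) ^ k)).
      rewrite (is_series_unique _ _ is_series_geom_half); simpl; lra. }
  assert (t * sum_s < eps / 2).
  { apply Rle_lt_trans with (t * (sum_s + 1)); [nra|].
    apply Rlt_le_trans with (eps / (2 * (sum_s + 1)) * (sum_s + 1)); [nra|].
    right; field; lra. }
  lra.
Qed.

Lemma dF_fadd_fscal_small (F : FrechetEntire) (f P : C -> C) : Fset F P ->
  forall eps, 0 < eps -> exists eta, 0 < eta /\ forall c, Cmod c < eta ->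
    dF (sn F) f (fadd f (fscal c P)) < eps.
Proof.
  intros HP eps Heps.
  destruct (series_weighted_min_small (fun j => sn F j P) (fun j => sn_nonneg F j P HP)
              eps Heps) as [eta [Heta Hsmall]].
  exists eta; split; [exact Heta|]; intros c Hc.
  assert (Hdiff : fsub f (fadd f (fscal c P)) = fscal (- c)%C P).
  { apply functional_extensionality; intro z; unfold fsub, fadd, fscal; ring. }
  unfold dF; rewrite Hdiff.
  rewrite (Series_ext _ (fun j => / 2 ^ j * Rmin 1 (Cmod c * sn F j P))).
  - apply Hsmall; split; [apply Cmod_ge_0 | exact Hc].
  - intro j; rewrite sn_homog, Cmod_opp by exact HP; reflexivity.
Qed.

Lemma FfA_fadd_fscal (F : FrechetEntire) (f h : C -> C) (A : C -> Prop) (c : C) :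
  Fset F f -> Fset F h -> (forall a, A a -> double_zero h a) ->
  FfA F f A (fadd f (fscal c h)).
Proof.
  intros Hf Hh Hzero; split; [|split].
  - apply Fset_add; [exact Hf | apply Fset_scal, Hh].
  - intros a Ha; unfold fadd, fscal; rewrite (proj1 (Hzero a Ha)); ring.
  - intros a Ha; destruct (Fset_entire F f Hf a) as [l Hl]; exists l; split; [|exact Hl].
    eapply is_derive_C_eq.
    + apply is_derive_C_plus; [exact Hl|].
      apply is_derive_C_mult; [apply is_derive_C_const | exact (proj2 (Hzero a Ha))].
    + ring.
Qed.

Lemma dense_set_affine (E : C -> Prop) : dense_set E ->
  forall y p eta, 0 < eta -> E y \/ p <> RtoC 0 ->
  exists c, Cmod c < eta /\ E (y + c * p)%C.
Proof.
  intros HE y p eta Heta [Hy | Hp].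
  - exists (RtoC 0); split; [rewrite Cmod_0; exact Heta|].
    now replace (y + RtoC 0 * p)%C with y by ring.
  - assert (Hpos : 0 < Cmod p) by (apply Cmod_gt_0; exact Hp).
    destruct (HE y (Cmod p * eta) ltac:(nra)) as [w [Hw Hwy]].
    exists ((w - y) / p)%C; split.
    + rewrite Cmod_div by exact Hp.
      apply Rmult_lt_reg_r with (Cmod p); [exact Hpos|].
      unfold Rdiv; rewrite Rmult_assoc, Rinv_l by lra; lra.
    + now replace (y + (w - y) / p * p)%C with w by (field; exact Hp).
Qed.

Theorem lemma2p3 (F : FrechetEntire) (E : C -> Prop)
  (HEc : countable_set E) (HEd : dense_set E)
  (f : C -> C) (Hf : Fset F f)
  (A : C -> Prop) (HAfin : finite_set A) (HAE : forall a, A a -> E (f a))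
  (b : C) :
  forall eps, 0 < eps ->
    exists g, FfA F f A g /\ dF (sn F) f g < eps /\ E (g b).
Proof.
  intros eps Heps.
  destruct HAfin as [L HL].
  set (P := peval (poly_double_roots L)).
  destruct (dF_fadd_fscal_small F f P (Fset_poly F _) eps Heps) as [eta [Heta Hsmall]].
  assert (Hb : E (f b) \/ P b <> RtoC 0).
  { destruct (classic (In b L)) as [HbL | HbL].
    - left; apply HAE, HL, HbL.
    - right; apply poly_double_roots_neq_0, HbL. }
  destruct (dense_set_affine E HEd (f b) (P b) eta Heta Hb) as [c [Hc HgE]].
  exists (fadd f (fscal c P)); split; [|split].
  - apply FfA_fadd_fscal; [exact Hf | apply Fset_poly|].
    intros a Ha; apply poly_double_roots_double_zero, HL, Ha.
  - apply Hsmall, Hc.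
  - exact HgE.
Qed.
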